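(* Let $\mathcal{U}\subset\Delta(\mathcal{X}\times\mathcal{Y})$ be a convex and compact uncertainty set, let $\mathrm{h}^{\mathcal{U}}\in \mathrm{T}(\mathcal{X},\mathcal{Y})$ be an $\ell$-MRC for $\mathcal{U}$, and let $\mathrm{p}^{\mathcal{U}}\in\mathcal{U}$ be a probability distribution with maximum $\ell$-entropy over $\mathcal{U}$. Then $$H_\ell(\mathcal{U})=\ell(\mathrm{h}^{\mathcal{U}},\mathrm{p}^{\mathcal{U}})=\min_{\mathrm{h}\in \mathrm{T}(\mathcal{X},\mathcal{Y})}\max_{\mathrm{p}\in\mathcal{U}}\ell(\mathrm{h},\mathrm{p});$$ that is, $\mathrm{h}^{\mathcal{U}}$ minimizes the expected $\ell$-loss with respect to $\mathrm{p}^{\mathcal{U}}$, $\mathrm{p}^{\mathcal{U}}$ maximizes the expected $\ell$-loss of $\mathrm{h}^{\mathcal{U}}$ over distributions in $\mathcal{U}$, and this expected $\ell$-loss coincides with the maximum $\ell$-entropy over $\mathcal{U}$.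
   Context: Let $\mathcal{X}$ and $\mathcal{Y}$ be finite nonempty sets, with $\mathcal{Y}=\{1,\dots,|\mathcal{Y}|\}$. For a finite set $\mathcal{Z}$, $\Delta(\mathcal{Z})$ denotes the set of probability distributions on $\mathcal{Z}$. A classification rule is a map $\mathrm{h}$ assigning to each $x\in\mathcal{X}$ a distribution $\mathrm{h}(\cdot|x)\in\Delta(\mathcal{Y})$; $\mathrm{T}(\mathcal{X},\mathcal{Y})$ is the set of all classification rules. A score function $L:\Delta(\mathcal{Y})\times\mathcal{Y}\to(-\infty,\infty]$ is lower semi-continuous and convex in its first argument; the associated classification loss is $\ell(\mathrm{h},(x,y))=L(\mathrm{h}(\cdot|x),y)$, and for $\mathrm{p}\in\Delta(\mathcal{X}\times\mathcal{Y})$ the expected loss is $\ell(\mathrm{h},\mathrm{p})=\sum_{x\in\mathcal{X},y\in\mathcal{Y}}\mathrm{p}(x,y)\ell(\mathrm{h},(x,y))$. The $\ell$-entropy of $\mathrm{p}$ is $H_\ell(\mathrm{p})=\min_{\mathrm{h}\in\mathrm{T}(\mathcal{X},\mathcal{Y})}\ell(\mathrm{h},\mathrm{p})$, and for a compact $\mathcal{U}\subset\Delta(\mathcal{X}\times\mathcal{Y})$, $H_\ell(\mathcal{U})=\max_{\mathrm{p}\in\mathcal{U}}H_\ell(\mathrm{p})$. For a convex compact $\mathcal{U}$, a rule $\mathrm{h}^{\mathcal{U}}$ is an $\ell$-MRC (minimax risk classifier) for $\mathcal{U}$ if $\mathrm{h}^{\mathcal{U}}\in\arg\min_{\mathrm{h}\in\mathrm{T}(\mathcal{X},\mathcal{Y})}\max_{\mathrm{p}\in\mathcal{U}}\ell(\mathrm{h},\mathrm{p})$.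 *)

From HB Require Import structures.
From mathcomp Require Import all_boot all_order all_algebra.
From mathcomp Require Import all_classical all_reals all_analysis.
Set Implicit Arguments. Unset Strict Implicit. Unset Printing Implicit Defensive.
Import Order.TTheory GRing.Theory Num.Theory.
Import numFieldNormedType.Exports.
Local Open Scope classical_set_scope.
Local Open Scope ring_scope.

Section Defs.
Variable R : realType.

Definition Delta (Z : finType) : set (Z -> R) :=
  [set q | (forall z, 0 <= q z) /\ \sum_(z : Z) q z = 1].

Variables X Y : finType.

Definition rules : set (X -> Y -> R) := [set h | forall x, Delta (h x)].

Definition DeltaY_top : set {ptws Y -> R} := @Delta Y.

(* score function L : Delta(Y) x Y -> (-oo, +oo], lsc and convex in its
   first argument (topology of Delta(Y) = subspace of R^Y with the
   product topology). Values of L outside Delta(Y) are irrelevant. *)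
Definition score_function (L : (Y -> R) -> Y -> \bar R) : Prop :=
  [/\ (forall q y, Delta q -> L q y != -oo%E),
      (forall y, lower_semicontinuous
                   (fun q : subspace DeltaY_top => L q y)) &
      (forall y q1 q2 (t : R), Delta q1 -> Delta q2 -> 0 <= t <= 1 ->
         (L (fun z => (t * q1 z + (1 - t) * q2 z)%R) y
          <= t%:E * L q1 y + (1 - t)%R%:E * L q2 y)%E)].

Definition exp_loss (L : (Y -> R) -> Y -> \bar R) (h : X -> Y -> R)
  (p : X * Y -> R) : \bar R :=
  (\sum_(xy : X * Y) (p xy)%:E * L (h xy.1) xy.2)%E.

Definition entropy L (p : X * Y -> R) : \bar R :=
  ereal_inf [set exp_loss L h p | h in rules].

Definition entropy_set L (U : set (X * Y -> R)) : \bar R :=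
  ereal_sup [set entropy L p | p in U].

Definition max_risk L (U : set (X * Y -> R)) (h : X -> Y -> R) : \bar R :=
  ereal_sup [set exp_loss L h p | p in U].

Definition minimax_risk L (U : set (X * Y -> R)) : \bar R :=
  ereal_inf [set max_risk L U h | h in rules].

Definition is_MRC L (U : set (X * Y -> R)) (h : X -> Y -> R) : Prop :=
  rules h /\ forall h', rules h' -> (max_risk L U h <= max_risk L U h')%E.

Definition convex_set (U : set (X * Y -> R)) : Prop :=
  forall p q (t : R), U p -> U q -> 0 <= t <= 1 ->
    U (fun z => t * p z + (1 - t) * q z).

End Defs.
Arguments Delta {R} Z _ : rename.

(* The nontrivial inequality, min_h max_(p in U) l(h,p) <= max_(p in U) H_l(p),
   is a minimax theorem of Sion type: l(h,p) is convex and lower semicontinuous in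
   the rule h, which ranges over the compact convex set T(X,Y), and affine in p.
   If max_(p in U) H_l(p) < c, each p in U admits a rule with loss below c.
   A connectedness argument on ]0,1[ merges the constraints of two
   distributions into one rule (up to any e > 0), induction handles finitely
   many, and compactness with lower semicontinuity yields a single rule whose
   worst-case loss is at most c. Combined with the trivial inequalities
   H_l(p^U) <= l(h^U,p^U) <= max_(p in U) l(h^U,p), all quantities coincide. *)

From mathcomp Require Import all_boot all_order all_algebra.
From mathcomp Require Import all_classical all_reals all_analysis.
From mathcomp Require Import ring lra.
Set Implicit Arguments.
Unset Strict Implicit.
Unset Printing Implicit Defensive.

Import Order.TTheory GRing.Theory Num.Theory.
Import numFieldNormedType.Exports.
Local Open Scope classical_set_scope.
Local Open Scope ring_scope.

Section real_convexity.
Variable R : realType.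

Lemma ltr_conv (s x y c : R) : 0 <= s <= 1 -> x < c -> y < c ->
  s * x + (1 - s) * y < c.
Proof.
move=> /andP[s_ge0 s_le1] xc yc.
have sx : s * x <= s * c by rewrite ler_wpM2l // ltW.
have [s_lt1|s_ge1] := ltP s 1.
  have : (1 - s) * y < (1 - s) * c by rewrite ltr_pM2l // subr_gt0.
  lra.
have -> : s = 1 by apply/le_anti; rewrite s_le1 s_ge1.
lra.
Qed.

Lemma affine_crossing (a1 a2 b1 b2 t c : R) : a1 < a2 -> b2 < b1 ->
  t * a1 + (1 - t) * a2 < c -> t * b1 + (1 - t) * b2 < c ->
  exists s : R, [/\ 0 <= s <= 1, s * a1 + (1 - s) * b1 < c
                & s * a2 + (1 - s) * b2 < c].
Proof.
move=> a12 b21 ac bc; set d := b1 - b2 + (a2 - a1).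
have d_gt0 : 0 < d by rewrite /d; lra.
pose s := (b1 - b2) / d.
have sd : s * d = b1 - b2 by rewrite /s divfK ?gt_eqF.
have s01 : 0 <= s <= 1.
  apply/andP; split; first by rewrite /s divr_ge0 // ?subr_ge0 ltW.
  by rewrite /s ler_pdivrMr // mul1r /d; lra.
(* [s] is where the two segments cross; their common value there is an
   [s]-mix of the two hypotheses. *)
have same : s * a1 + (1 - s) * b1 = s * a2 + (1 - s) * b2.
  by move: sd; rewrite /d; lra.
have common : s * a1 + (1 - s) * b1 =
    s * (t * a1 + (1 - t) * a2) + (1 - s) * (t * b1 + (1 - t) * b2).
  rewrite [RHS](_ : _ = t * (s * a1 + (1 - s) * b1)
                        + (1 - t) * (s * a2 + (1 - s) * b2)); last by ring.
  by rewrite -same; ring.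
by exists s; rewrite -?same common; split => //; apply: ltr_conv.
Qed.

Lemma open_affine_lt (x y c : R) : open [set t : R | t * x + (1 - t) * y < c].
Proof.
have cont : continuous (fun t : R => t * x + (1 - t) * y).
  move=> t; apply: cvgD; first exact: cvgMr_tmp.
  by apply: cvgMr_tmp; apply: cvgB; [exact: cvg_cst | exact: cvg_id].
exact: (open_comp (fun t _ => cont t) (@open_lt _ c)).
Qed.

Lemma small_weight_conv_ge (M c e : R) : 0 < e -> exists2 d : R, 0 < d < 1 &
  forall x y : R, c + e <= x -> M <= y -> c <= (1 - d) * x + d * y.
Proof.
move=> e_gt0; set k := e + `|c - M| + 1.
have k_gt0 : 0 < k by rewrite /k; have := normr_ge0 (c - M); lra.
have dk : e / k * k = e by rewrite divfK ?gt_eqF.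
exists (e / k).
  by rewrite divr_gt0 //= ltr_pdivrMr // mul1r /k; have := normr_ge0 (c - M); lra.
move=> x y cx My; set d := e / k.
have d_ge0 : 0 <= d by rewrite divr_ge0 ?ltW.
have d_le1 : d <= 1.
  by rewrite /d ler_pdivrMr // mul1r /k; have := normr_ge0 (c - M); lra.
have dx : (1 - d) * (c + e) <= (1 - d) * x by rewrite ler_wpM2l ?subr_ge0.
have dy : d * M <= d * y by rewrite ler_wpM2l.
have dcM : d * (c - M) <= d * `|c - M| by rewrite ler_wpM2l ?ler_norm.
by move: dk; rewrite -/d /k; lra.
Qed.

End real_convexity.

(* Convexity is stated along an abstract mixing operation: [mix s a b] plays
   the role of [s a + (1 - s) b]. *)
Section convex_pair.
Variables (R : realType) (T : Type) (S : set T) (mix : R -> T -> T -> T).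
Variables (g1 g2 : T -> R) (M c e : R).
Hypothesis S_mix : forall (s : R) a b, 0 <= s <= 1 -> S a -> S b -> S (mix s a b).
Hypothesis g1_convex : forall (s : R) a b, 0 <= s <= 1 -> S a -> S b ->
  g1 (mix s a b) <= s * g1 a + (1 - s) * g1 b.
Hypothesis g2_convex : forall (s : R) a b, 0 <= s <= 1 -> S a -> S b ->
  g2 (mix s a b) <= s * g2 a + (1 - s) * g2 b.
Hypotheses (g1_ge : forall a, S a -> M <= g1 a)
           (g2_ge : forall a, S a -> M <= g2 a).
Hypothesis comb_lt : forall t : R, 0 < t < 1 ->
  exists2 a, S a & t * g1 a + (1 - t) * g2 a < c.
Hypothesis e_gt0 : 0 < e.

Section separated_sublevels.
Hypothesis separated : forall a, S a -> g1 a < c + e -> c + e <= g2 a.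

(* The weights [t] witnessed by a point with small [g1], resp. small [g2], form
   two disjoint open sets covering ]0, 1[, against its connectedness. *)
Let A := \bigcup_(a in [set a | S a /\ g1 a < c + e])
  [set t | t * g1 a + (1 - t) * g2 a < c].
Let B := \bigcup_(a in [set a | S a /\ g2 a < c + e])
  [set t | t * g1 a + (1 - t) * g2 a < c].

Let AB_disjoint t : A t -> B t -> False.
Proof.
move=> [a [Sa g1a] ta] [b [Sb g2b] tb].
have g12a : g1 a < g2 a := lt_le_trans g1a (separated Sa g1a).
have g21b : g2 b < g1 b.
  rewrite (lt_le_trans g2b) // leNgt; apply/negP => g1b.
  by have := separated Sb g1b; rewrite leNgt g2b.
have [s [s01 lt1 lt2]] := affine_crossing g12a g21b ta tb.
have c_lt : c < c + e by rewrite ltrDl.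
have g1m := le_lt_trans (g1_convex s01 Sa Sb) (lt_trans lt1 c_lt).
have g2m := le_lt_trans (g2_convex s01 Sa Sb) (lt_trans lt2 c_lt).
by have := separated (S_mix s01 Sa Sb) g1m; rewrite leNgt g2m.
Qed.

Let AB_cover (t : R) : 0 < t < 1 -> A t \/ B t.
Proof.
move=> /[dup] t01 /andP[t_gt0 t_lt1]; have [a Sa ta] := comb_lt t01.
have [g1a|g1a] := ltP (g1 a) (c + e); first by left; exists a.
have [g2a|g2a] := ltP (g2 a) (c + e); first by right; exists a.
by exfalso; move: ta; have := e_gt0; nra.
Qed.

Let AB_inhabited : exists d : R, [/\ 0 < d < 1, A (1 - d) & B d].
Proof.
have [d /andP[d_gt0 d_lt1] dH] := small_weight_conv_ge M c e_gt0.
exists d; split; first by rewrite d_gt0.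
  have /comb_lt[a Sa ta] : 0 < 1 - d < 1 by apply/andP; split; lra.
  have [g1a|g1a] := ltP (g1 a) (c + e); first by exists a.
  by have := dH _ _ g1a (g2_ge Sa); lra.
have /comb_lt[a Sa ta] : 0 < d < 1 by apply/andP; split.
have [g2a|g2a] := ltP (g2 a) (c + e); first by exists a.
by have := dH _ _ g2a (g1_ge Sa); lra.
Qed.

Lemma separated_sublevels_absurd : False.
Proof.
have [d [/andP[d_gt0 d_lt1] A1d Bd]] := AB_inhabited.
pose I : set R := [set` (`]0, 1[ : interval R)].
have I_connected : connected I by exact/connected_intervalP/interval_is_interval.
have IA : I `&` A = I.
  apply: I_connected.
  - exists (1 - d); split => //.
    by rewrite /I /= in_itv /=; apply/andP; split; lra.
  - by exists A => //; apply: bigcup_open => a _; exact: open_affine_lt.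
  - exists (~` B).
      by apply: open_closedC; apply: bigcup_open => a _; exact: open_affine_lt.
    apply/seteqP; split => t [It ABt]; split => //; first exact: AB_disjoint.
    by move: It; rewrite /I /= in_itv /= => /AB_cover[] // /ABt.
have : I d by rewrite /I /= in_itv /= d_gt0.
by rewrite -IA => -[_ Ad]; exact: AB_disjoint Ad Bd.
Qed.

End separated_sublevels.

Lemma convex_pair_sublevel : exists2 a, S a & g1 a < c + e /\ g2 a < c + e.
Proof.
apply: contrapT => no_common; apply: separated_sublevels_absurd => a Sa g1a.
by rewrite leNgt; apply/negP => g2a; apply: no_common; exists a.
Qed.

End convex_pair.

Section ereal_conv.
Variable R : realType.
Local Open Scope ereal_scope.

Lemma fin_num_conv_lt (t c : R) (x y : \bar R) : (0 < t < 1)%R ->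
  x != -oo -> y != -oo -> t%:E * x + (1 - t)%:E * y < c%:E ->
  x \is a fin_num /\ y \is a fin_num.
Proof.
move=> /andP[t_gt0 t_lt1]; have t'_gt0 : (0 < 1 - t)%R by rewrite subr_gt0.
case: x => [x| |] //; case: y => [y| |] // _ _; rewrite ?gt0_muley ?lte_fin //.
all: by rewrite ?addye ?addey // ltNge leey.
Qed.

Lemma lte_conv (s c : R) (x y : \bar R) : (0 <= s <= 1)%R ->
  x != -oo -> y != -oo -> x < c%:E -> y < c%:E ->
  s%:E * x + (1 - s)%:E * y < c%:E.
Proof.
move=> s01; case: x => [x| |] //; case: y => [y| |] // _ _.
by rewrite -!EFinM -EFinD !lte_fin; exact: ltr_conv.
Qed.

Lemma lte_between_EFin (x y : \bar R) : x < y -> exists r : R, x < r%:E < y.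
Proof.
case: x => [x| |]; case: y => [y| |] //; rewrite ?lte_fin => xy.
- by exists ((x + y) / 2)%R; rewrite !lte_fin; apply/andP; split; lra.
- by exists (x + 1)%R; rewrite ltry lte_fin andbT; lra.
- by exists (y - 1)%R; rewrite ltNyr lte_fin; lra.
- by exists 0%R; rewrite ltNyr ltry.
Qed.

Lemma lte_add_split (a : R) (x y : \bar R) : x != -oo -> y != -oo ->
  a%:E < x + y -> exists a1 a2 : R, [/\ a1%:E < x, a2%:E < y & a = (a1 + a2)%R].
Proof.
case: x => [x| |] //; case: y => [y| |] // _ _.
- rewrite -EFinD lte_fin => axy; exists (x - (x + y - a) / 2)%R.
  by exists (a - (x - (x + y - a) / 2))%R; rewrite !lte_fin; split; lra.
- by exists (x - 1)%R, (a - (x - 1))%R; rewrite lte_fin ltry; split => //; lra.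
- by exists (a - (y - 1))%R, (y - 1)%R; rewrite lte_fin ltry; split => //; lra.
- by exists 0%R, a; rewrite !ltry add0r.
Qed.

Lemma ge0_mule_neqNy (r : R) (x : \bar R) : (0 <= r)%R -> x != -oo ->
  r%:E * x != -oo.
Proof.
rewrite le_eqVlt => /predU1P[<-|r_gt0]; first by rewrite mul0e.
by case: x => [x| |] // _; rewrite ?gt0_muley ?lte_fin.
Qed.

Lemma adde_def_neqNy (x y : \bar R) : x != -oo -> y != -oo -> x +? y.
Proof. by case: x => [x| |]; case: y => [y| |]. Qed.

Lemma sume_neqNy (I : Type) (s : seq I) (F : I -> \bar R) :
  (forall i, F i != -oo) -> \sum_(i <- s) F i != -oo.
Proof.
move=> FNy; apply: (big_ind (fun v : \bar R => is_true (v != -oo))) => // u v.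
by rewrite adde_eq_ninfty negb_or => ->.
Qed.

End ereal_conv.

Section convex_pair_ereal.
Variables (R : realType) (T : Type) (S : set T) (mix : R -> T -> T -> T).
Variables (g1 g2 : T -> \bar R) (M c e : R).
Local Open Scope ereal_scope.
Hypothesis S_mix : forall (s : R) a b, (0 <= s <= 1)%R -> S a -> S b ->
  S (mix s a b).
Hypothesis g1_convex : forall (s : R) a b, (0 <= s <= 1)%R -> S a -> S b ->
  g1 (mix s a b) <= s%:E * g1 a + (1 - s)%:E * g1 b.
Hypothesis g2_convex : forall (s : R) a b, (0 <= s <= 1)%R -> S a -> S b ->
  g2 (mix s a b) <= s%:E * g2 a + (1 - s)%:E * g2 b.
Hypotheses (g1_ge : forall a, S a -> M%:E <= g1 a)
           (g2_ge : forall a, S a -> M%:E <= g2 a).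
Hypothesis comb_lt : forall t : R, (0 < t < 1)%R ->
  exists2 a, S a & t%:E * g1 a + (1 - t)%:E * g2 a < c%:E.
Hypothesis e_gt0 : (0 < e)%R.

(* Reduction to the real case on the points where [g1] and [g2] are finite:
   they form a mix-closed set containing every witness of [comb_lt]. *)
Let finite_at a := [/\ S a, g1 a \is a fin_num & g2 a \is a fin_num].

Let fine_convex (g : T -> \bar R) :
  (forall (s : R) a b, (0 <= s <= 1)%R -> S a -> S b ->
     g (mix s a b) <= s%:E * g a + (1 - s)%:E * g b) ->
  (forall a, S a -> M%:E <= g a) ->
  forall (s : R) a b, (0 <= s <= 1)%R -> S a -> S b ->
    g a \is a fin_num -> g b \is a fin_num ->
    g (mix s a b) \is a fin_num /\
    (fine (g (mix s a b)) <= s * fine (g a) + (1 - s) * fine (g b))%R.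
Proof.
move=> g_convex g_ge s a b s01 Sa Sb ga gb.
have g_le := g_convex s a b s01 Sa Sb.
rewrite -(fineK ga) -(fineK gb) -!EFinM -EFinD in g_le.
have gm_fin : g (mix s a b) \is a fin_num.
  have gm := g_ge _ (S_mix s01 Sa Sb).
  by rewrite fin_numElt (lt_le_trans (ltNyr M) gm) (le_lt_trans g_le (ltry _)).
by split => //; rewrite -lee_fin fineK.
Qed.

Lemma convex_pair_sublevelE :
  exists2 a, S a & g1 a < (c + e)%:E /\ g2 a < (c + e)%:E.
Proof.
have gNy g a : (forall a, S a -> M%:E <= g a) -> S a -> g a != -oo.
  by move=> g_ge Sa; rewrite gt_eqF // (lt_le_trans (ltNyr M)) ?g_ge.
have [||||||//|a [Sa g1a g2a] [/= lt1 lt2]] :=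
  @convex_pair_sublevel R T finite_at mix (fine \o g1) (fine \o g2) M c e.
- move=> s a b s01 [Sa g1a g2a] [Sb g1b g2b]; split; first exact: S_mix.
    by case: (fine_convex g1_convex g1_ge s01 Sa Sb g1a g1b).
  by case: (fine_convex g2_convex g2_ge s01 Sa Sb g2a g2b).
- move=> s a b s01 [Sa g1a _] [Sb g1b _].
  by case: (fine_convex g1_convex g1_ge s01 Sa Sb g1a g1b).
- move=> s a b s01 [Sa _ g2a] [Sb _ g2b].
  by case: (fine_convex g2_convex g2_ge s01 Sa Sb g2a g2b).
- by move=> a [Sa g1a _] /=; rewrite -lee_fin fineK ?g1_ge.
- by move=> a [Sa _ g2a] /=; rewrite -lee_fin fineK ?g2_ge.
- move=> t /[dup] t01 /comb_lt[a Sa lt_c].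
  have [g1a g2a] :=
    fin_num_conv_lt t01 (gNy _ _ g1_ge Sa) (gNy _ _ g2_ge Sa) lt_c.
  by exists a => //=; rewrite -lte_fin EFinD !EFinM !fineK.
by exists a => //; rewrite -(fineK g1a) -(fineK g2a) !lte_fin.
Qed.

End convex_pair_ereal.

Section lsc_within.
Context {R : realType} {T : topologicalType}.
Local Open Scope ereal_scope.

Definition lsc_within (K : set T) (phi : T -> \bar R) :=
  forall x (a : R), K x -> a%:E < phi x -> \forall y \near x, K y -> a%:E < phi y.

Lemma lsc_withinD (K : set T) (phi psi : T -> \bar R) :
  lsc_within K phi -> lsc_within K psi ->
  (forall x, K x -> phi x != -oo) -> (forall x, K x -> psi x != -oo) ->
  lsc_within K (phi \+ psi).
Proof.
move=> phi_lsc psi_lsc phiNy psiNy x a Kx /=.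
move=> /(lte_add_split (phiNy _ Kx) (psiNy _ Kx))[a1 [a2 [lt1 lt2 ->]]].
apply: filterS2 (phi_lsc _ _ Kx lt1) (psi_lsc _ _ Kx lt2) => y lt1y lt2y Ky.
by rewrite EFinD lteD ?lt1y ?lt2y.
Qed.

Lemma lsc_within_sum (K : set T) (I : Type) (s : seq I) (F : I -> T -> \bar R) :
  (forall i, lsc_within K (F i)) -> (forall i x, K x -> F i x != -oo) ->
  lsc_within K (fun x => \sum_(i <- s) F i x).
Proof.
move=> F_lsc FNy; elim: s => [|i s IH].
  by move=> x a Kx; rewrite big_nil => a0; near=> y => _; rewrite big_nil.
have -> : (fun x => \sum_(j <- i :: s) F j x) =
    F i \+ fun x => \sum_(j <- s) F j x.
  by apply/funext => x; rewrite big_cons.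
apply: lsc_withinD => // x Kx; first exact: FNy.
by apply: sume_neqNy => j; exact: FNy.
Unshelve. all: by end_near.
Qed.

Lemma lsc_within_scale (K : set T) (phi : T -> \bar R) (r : R) : (0 <= r)%R ->
  lsc_within K phi -> lsc_within K (fun x => r%:E * phi x).
Proof.
rewrite le_eqVlt => /predU1P[<- _ x a _|r_gt0 phi_lsc x a Kx].
  by rewrite mul0e => a_lt0; near=> y => _; rewrite mul0e.
rewrite -lte_pdivrMl // -EFinM => /(phi_lsc _ _ Kx).
by apply: filterS => y lt_y Ky; rewrite -lte_pdivrMl // -EFinM lt_y.
Unshelve. all: by end_near.
Qed.

Lemma lsc_within_comp (T' : topologicalType) (K : set T) (K' : set T')
    (g : T -> T') (phi : subspace K' -> \bar R) :
  continuous g -> (forall x, K x -> K' (g x)) -> lower_semicontinuous phi ->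
  lsc_within K (fun x => phi (g x)).
Proof.
move=> g_cont gK phi_lsc x a Kx /phi_lsc[V V_nbhs V_gt].
have V_within : within K' (nbhs (g x)) V.
  by rewrite nbhs_subspace_in //; exact: gK.
have V_near : \forall y \near x, K' (g y) -> V (g y) := g_cont x _ V_within.
apply: filterS V_near => y V_gy Ky.
exact/V_gt/V_gy/gK.
Qed.

Lemma lsc_within_closure_le (K B : set T) (phi : T -> \bar R) x (r : R) :
  lsc_within K phi -> K x -> closure B x -> B `<=` K ->
  (forall y, B y -> phi y <= r%:E) -> phi x <= r%:E.
Proof.
move=> phi_lsc Kx clBx BK Br; rewrite leNgt; apply/negP.
move=> /(phi_lsc _ _ Kx) near_x.
have [y [By /(_ (BK _ By))]] := clBx _ near_x.
by rewrite ltNge Br.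
Qed.

Lemma compact_directed_cluster (K : set T) (I : Type) (D : set I)
    (B : I -> set T) :
  compact K -> D !=set0 ->
  (forall i j, D i -> D j -> exists2 k, D k & B k `<=` B i `&` B j) ->
  (forall i, D i -> B i `<=` K) -> (forall i, D i -> B i !=set0) ->
  exists2 x, K x & forall i, D i -> closure (B i) x.
Proof.
move=> K_compact [i0 Di0] B_directed BK B_neq0.
have B_filter : ProperFilter (filter_from D B).
  apply: filter_from_proper => //.
  by apply: filter_from_filter; first by exists i0.
have [|x [Kx clx]] := K_compact _ B_filter; first by exists i0 => //; exact: BK.
by exists x => // i Di W W_nbhs; apply: clx => //; exists i.
Qed.

Lemma lsc_within_bounded_below (K : set T) (phi : T -> \bar R) :
  compact K -> lsc_within K phi -> (forall x, K x -> phi x != -oo) ->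
  exists M : R, forall x, K x -> M%:E <= phi x.
Proof.
move=> K_compact phi_lsc phiNy.
have [//|unbounded] := pselect (exists M : R, forall x, K x -> M%:E <= phi x).
have below (r : R) : exists x, K x /\ phi x < r%:E.
  apply: contrapT => no_below; apply: unbounded; exists r => x Kx.
  by rewrite leNgt; apply/negP => lt_r; apply: no_below; exists x.
have [||||x Kx clx] := compact_directed_cluster (D := setT)
  (B := fun r : R => [set x | K x /\ phi x < r%:E]) K_compact.
- by exists 0%R.
- move=> r1 r2 _ _; exists (Num.min r1 r2) => // x [Kx lt_min].
  split; split => //.
    by rewrite (lt_le_trans lt_min) // lee_fin ge_min lexx.
  by rewrite (lt_le_trans lt_min) // lee_fin ge_min lexx orbT.
- by move=> r _ x [].
- by move=> r _; have [x bx] := below r; exists x.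
have := phiNy _ Kx; rewrite (_ : phi x = -oo) //; apply: eq_ninfty => r.
apply: (lsc_within_closure_le phi_lsc Kx (clx r I)) => [y []//|y [_ /ltW]//].
Qed.

End lsc_within.

Section minimax.
Variables (R : realType) (T : topologicalType) (K : set T).
Variable mixT : R -> T -> T -> T.
Variables (P : Type) (U : set P) (mixP : R -> P -> P -> P) (f : T -> P -> \bar R).
Local Open Scope ereal_scope.

Hypothesis K_compact : compact K.
Hypothesis K_mix : forall (s : R) a b, (0 <= s <= 1)%R -> K a -> K b ->
  K (mixT s a b).
Hypothesis U_mix : forall (t : R) q p, (0 <= t <= 1)%R -> U q -> U p ->
  U (mixP t q p).
Hypothesis f_convex : forall p (s : R) a b, U p -> (0 <= s <= 1)%R ->
  K a -> K b -> f (mixT s a b) p <= s%:E * f a p + (1 - s)%:E * f b p.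
Hypothesis f_affine : forall a (t : R) q p, K a -> (0 <= t <= 1)%R ->
  U q -> U p -> f a (mixP t q p) = t%:E * f a q + (1 - t)%:E * f a p.
Hypothesis f_lsc : forall p, U p -> lsc_within K (f^~ p).
Hypothesis f_neqNy : forall a p, K a -> U p -> f a p != -oo.

Let mix_closed (S : set T) :=
  forall (s : R) a b, (0 <= s <= 1)%R -> S a -> S b -> S (mixT s a b).

Let f_bounded_below p : U p -> exists M : R, forall a, K a -> M%:E <= f a p.
Proof.
move=> Up; apply: lsc_within_bounded_below K_compact (f_lsc Up) _ => a Ka.
exact: f_neqNy.
Qed.

Let pair_sublevel (S : set T) (c e : R) p : S `<=` K -> mix_closed S ->
  (forall q, U q -> exists2 a, S a & f a q < c%:E) -> U p -> (0 < e)%R ->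
  forall q, U q -> exists2 a, S a & f a q < (c + e)%:E /\ f a p < (c + e)%:E.
Proof.
move=> SK S_mix S_lt Up e_gt0 q Uq.
have [[Mq Mq_le] [Mp Mp_le]] := (f_bounded_below Uq, f_bounded_below Up).
apply: (@convex_pair_sublevelE _ _ S mixT (f^~ q) (f^~ p) (Num.min Mq Mp)) => //.
- by move=> s a b s01 Sa Sb; exact: f_convex (SK _ Sa) (SK _ Sb).
- by move=> s a b s01 Sa Sb; exact: f_convex (SK _ Sa) (SK _ Sb).
- by move=> a Sa; rewrite (le_trans _ (Mq_le _ (SK _ Sa))) // lee_fin ge_min lexx.
- move=> a Sa; rewrite (le_trans _ (Mp_le _ (SK _ Sa))) //.
  by rewrite lee_fin ge_min lexx orbT.
move=> t /andP[t_gt0 t_lt1]; have t01 : (0 <= t <= 1)%R by rewrite !ltW.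
have [a Sa lt_c] := S_lt _ (U_mix t01 Uq Up).
by exists a => //; rewrite -f_affine //; exact: SK.
Qed.

(* Induction on [ps]: [S] shrinks to its convex part where the head constraint
   holds with margin [e / 2]; [pair_sublevel] shows that the shrunk set still
   meets every constraint [f _ q < c + e / 2]. *)
Lemma finite_minimax (ps : seq P) : (forall p, List.In p ps -> U p) ->
  forall (S : set T) (c e : R), S `<=` K -> mix_closed S -> S !=set0 ->
  (forall q, U q -> exists2 a, S a & f a q < c%:E) -> (0 < e)%R ->
  exists2 a, S a & forall p, List.In p ps -> f a p < (c + e)%:E.
Proof.
elim: ps => [|p ps IH] ps_U S c e SK S_mix [a0 Sa0] S_lt e_gt0.
  by exists a0.
have Up : U p := ps_U p (or_introl erefl).
have e2_gt0 : (0 < e / 2)%R by rewrite divr_gt0.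
pose S' := [set a | S a /\ f a p < (c + e / 2)%:E].
have S'_lt q : U q -> exists2 a, S' a & f a q < (c + e / 2)%:E.
  move=> Uq; have [a Sa [lt_q lt_p]] := pair_sublevel SK S_mix S_lt Up e2_gt0 Uq.
  by exists a.
have S'_mix : mix_closed S'.
  move=> s a b s01 [Sa lt_a] [Sb lt_b]; split; first exact: S_mix.
  apply: le_lt_trans (f_convex Up s01 (SK _ Sa) (SK _ Sb)) _.
  by apply: lte_conv => //; apply: f_neqNy => //; exact: SK.
have [|||a [Sa lt_p] lt_ps] :=
  IH _ S' (c + e / 2)%R (e / 2)%R _ S'_mix _ S'_lt e2_gt0.
- by move=> p' ps_p'; apply: ps_U; right.
- by move=> a [/SK].
- by have [a S'a _] := S'_lt p Up; exists a.
exists a => // p' [<-|/lt_ps]; last by rewrite -addrA -splitr.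
by rewrite (lt_trans lt_p) // lte_fin ltrD2l ltr_pdivrMr // ltr_pMr // ltr1n.
Qed.

Theorem minimax_sublevel (c : R) : K !=set0 ->
  (forall q, U q -> exists2 a, K a & f a q < c%:E) ->
  exists2 a, K a & forall p, U p -> f a p <= c%:E.
Proof.
move=> K_neq0 U_lt.
pose D := [set i : seq P * R | (forall p, List.In p i.1 -> U p) /\ (0 < i.2)%R].
pose B (i : seq P * R) :=
  [set a | K a /\ forall p, List.In p i.1 -> f a p < (c + i.2)%:E].
have [||||a Ka cl_a] := compact_directed_cluster (D := D) (B := B) K_compact.
- by exists ([::], 1%R).
- move=> [ps1 e1] [ps2 e2] [/= ps1_U e1_gt0] [/= ps2_U e2_gt0].
  exists (ps1 ++ ps2, Num.min e1 e2).
    split => [p /= ps_p|/=]; last by rewrite lt_min e1_gt0.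
    by case: (List.in_app_or _ _ _ ps_p) => [/ps1_U|/ps2_U].
  have le_min (e' : R) (x : \bar R) : (e' = e1 \/ e' = e2) ->
      x < (c + Num.min e1 e2)%:E -> x < (c + e')%:E.
    move=> e'_eq lt_x; apply: (lt_le_trans lt_x); rewrite lee_fin lerD2l.
    by case: e'_eq => ->; rewrite ge_min lexx ?orbT.
  move=> a [Ka lt_a]; split; split => // p ps_p; apply: (le_min _ _ _ (lt_a p _)).
  + by left.
  + by apply: List.in_or_app; left.
  + by right.
  + by apply: List.in_or_app; right.
- by move=> i _ a [].
- move=> [ps e] [/= ps_U e_gt0].
  have [a Ka lt_ps] :=
    finite_minimax ps_U (@subset_refl _ K) K_mix K_neq0 U_lt e_gt0.
  by exists a.
exists a => // p Up; apply/lee_addgt0Pr => e e_gt0; rewrite -EFinD.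
apply: (lsc_within_closure_le (f_lsc Up) Ka (cl_a ([:: p], e) _)).
- by split => //= p' [<-|[]].
- by move=> y [].
- by move=> y [_ /(_ p (or_introl erefl)) /ltW].
Qed.

End minimax.

Section simplex.
Variable R : realType.

Lemma closed_Delta (Z : finType) : closed (Delta Z : set {ptws Z -> R}).
Proof.
have -> : (Delta Z : set {ptws Z -> R}) =
    \bigcap_(z in setT) ((fun q : {ptws Z -> R} => q z) @^-1` [set x | 0 <= x])
    `&` ((fun q : {ptws Z -> R} => \sum_z q z) @^-1` [set 1]).
  apply/seteqP; split => q [q_ge0 q_sum]; split => // z.
    by move=> _; apply: q_ge0.
  exact: q_ge0.

apply: closedI.
  apply: closed_bigI => z _; apply: preimage_closed; last exact: closed_ge.
  by move=> q _; exact: (@proj_continuous Z (fun=> R)).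
apply: preimage_closed; last exact: closed_eq.
move=> q _; apply: continuous_big; first exact: add_continuous.
by move=> z _; exact: (@proj_continuous Z (fun=> R)).
Qed.

Lemma compact_Delta (Z : finType) : compact (Delta Z : set {ptws Z -> R}).
Proof.
have cube := @tychonoff Z (fun=> R) (fun=> `[0, 1]%classic)
  (fun=> @segment_compact R 0 1).
apply: (subclosed_compact (@closed_Delta Z) cube) => q [q_ge0 q_sum] z /=.
rewrite in_itv /= q_ge0 -q_sum (bigD1 z) //= lerDl; exact: sumr_ge0.
Qed.

Lemma Delta_mix (Z : finType) (s : R) (q1 q2 : Z -> R) : 0 <= s <= 1 ->
  Delta Z q1 -> Delta Z q2 -> Delta Z (fun z => s * q1 z + (1 - s) * q2 z).
Proof.
move=> /andP[s_ge0 s_le1] [q1_ge0 q1_sum] [q2_ge0 q2_sum]; split.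
  by move=> z; rewrite addr_ge0 // mulr_ge0 // subr_ge0.
by rewrite big_split /= -!mulr_sumr q1_sum q2_sum; lra.
Qed.

End simplex.

Section classification.
Variables (R : realType) (X Y : finType) (L : (Y -> R) -> Y -> \bar R).
Hypothesis L_score : score_function L.
Local Notation H := {ptws X -> {ptws Y -> R}}.
Local Open Scope ereal_scope.

Definition mix_rule (s : R) (h1 h2 : X -> Y -> R) : X -> Y -> R :=
  fun x y => (s * h1 x y + (1 - s) * h2 x y)%R.

Definition mix_dist (t : R) (q p : X * Y -> R) : X * Y -> R :=
  fun z => (t * q z + (1 - t) * p z)%R.

Lemma rules_mix (s : R) (h1 h2 : X -> Y -> R) : (0 <= s <= 1)%R ->
  rules h1 -> rules h2 -> rules (mix_rule s h1 h2).
Proof. by move=> s01 h1_rule h2_rule x; exact: Delta_mix. Qed.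

Lemma convex_set_mix_dist (U : set (X * Y -> R)) (t : R) (q p : X * Y -> R) :
  convex_set U -> U q -> U p -> (0 <= t <= 1)%R -> U (mix_dist t q p).
Proof.
move=> U_convex Uq Up /andP[t_ge0 t_le1].
have := U_convex q p (Itv01 t_ge0 t_le1) (mem_set Uq) (mem_set Up).
by rewrite inE; congr U; apply: funext => z.
Qed.

Lemma compact_rules : compact (@rules R X Y : set H).
Proof. exact: tychonoff (fun=> @compact_Delta R Y). Qed.

Let L_neqNy (q : Y -> R) y : Delta Y q -> L q y != -oo.
Proof. by case: L_score => L_Ny _ _; exact: L_Ny. Qed.

Let loss_term_neqNy (h : X -> Y -> R) (p : X * Y -> R) xy :
  rules h -> Delta _ p -> (p xy)%:E * L (h xy.1) xy.2 != -oo.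
Proof. by move=> h_rule [p_ge0 _]; rewrite ge0_mule_neqNy ?L_neqNy. Qed.

Lemma exp_loss_neqNy (h : X -> Y -> R) (p : X * Y -> R) :
  rules h -> Delta _ p -> exp_loss L h p != -oo.
Proof.
by move=> h_rule p_dist; apply: sume_neqNy => xy; exact: loss_term_neqNy.
Qed.

Lemma exp_loss_convex (s : R) (h1 h2 : X -> Y -> R) (p : X * Y -> R) :
  (0 <= s <= 1)%R -> rules h1 -> rules h2 -> Delta _ p ->
  exp_loss L (mix_rule s h1 h2) p <=
    s%:E * exp_loss L h1 p + (1 - s)%:E * exp_loss L h2 p.
Proof.
move=> /[dup] s01 /andP[s_ge0 s_le1] h1_rule h2_rule p_dist.
rewrite /exp_loss !fin_num_sume_distrr // => [|i j _ _|i j _ _]; first last.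
- by rewrite adde_def_neqNy ?loss_term_neqNy.
- by rewrite adde_def_neqNy ?loss_term_neqNy.
rewrite -big_split /=; apply: lee_sum => xy _.
have [p_ge0 _] := p_dist; case: L_score => _ _ L_convex.
rewrite (muleCA s%:E) (muleCA (1 - s)%:E) -muleDr //; last first.
  by rewrite adde_def_neqNy ?ge0_mule_neqNy ?subr_ge0 ?L_neqNy.
by rewrite lee_wpmul2l ?lee_fin // L_convex.
Qed.

Lemma exp_loss_affine (t : R) (h : X -> Y -> R) (q p : X * Y -> R) :
  rules h -> (0 <= t <= 1)%R -> Delta _ q -> Delta _ p ->
  exp_loss L h (mix_dist t q p) =
    t%:E * exp_loss L h q + (1 - t)%:E * exp_loss L h p.
Proof.
move=> h_rule /andP[t_ge0 t_le1] q_dist p_dist.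
rewrite /exp_loss !fin_num_sume_distrr // => [|i j _ _|i j _ _]; first last.
- by rewrite adde_def_neqNy ?loss_term_neqNy.
- by rewrite adde_def_neqNy ?loss_term_neqNy.
rewrite -big_split /=; apply: eq_bigr => xy _.
have [[q_ge0 _] [p_ge0 _]] := (q_dist, p_dist).
rewrite /mix_dist EFinD ge0_muleDl ?lee_fin ?mulr_ge0 ?subr_ge0 //.
by rewrite !EFinM !muleA.
Qed.

Lemma exp_loss_lsc (p : X * Y -> R) : Delta _ p ->
  lsc_within (@rules R X Y : set H) (fun h : H => exp_loss L h p).
Proof.
move=> /[dup] p_dist [p_ge0 _].
apply: lsc_within_sum => [xy|xy h h_rule]; last exact: loss_term_neqNy.
apply: lsc_within_scale => //.
have [_ L_lsc _] := L_score.
apply: (lsc_within_comp (K' := @DeltaY_top R Y) _ _ (L_lsc xy.2)).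
  exact: (@proj_continuous X (fun=> {ptws Y -> R})).
by move=> h h_rule; exact: h_rule.
Qed.

Lemma rules_neq0 : (0 < #|Y|)%N -> @rules R X Y !=set0.
Proof.
move=> /card_gt0P[y0 _]; exists (fun _ y => (y == y0)%:R%R) => x.
split=> [y|]; first by rewrite ler0n.
by rewrite (bigD1 y0) //= eqxx big1 ?addr0 // => y /negbTE ->.
Qed.

Lemma entropy_le_exp_loss (h : X -> Y -> R) (p : X * Y -> R) :
  rules h -> entropy L p <= exp_loss L h p.
Proof. by move=> h_rule; apply: ereal_inf_lbound; exists h. Qed.

Lemma exp_loss_le_max_risk (U : set (X * Y -> R)) (h : X -> Y -> R) p :
  U p -> exp_loss L h p <= max_risk L U h.
Proof. by move=> Up; apply: ereal_sup_ubound; exists p. Qed.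

Lemma MRC_max_risk (U : set (X * Y -> R)) (h : X -> Y -> R) :
  is_MRC L U h -> max_risk L U h = minimax_risk L U.
Proof.
move=> [h_rule h_min]; apply/le_anti/andP; split.
  by apply: le_ereal_inf_tmp => _ [g g_rule <-]; exact: h_min.
by apply: ereal_inf_lbound; exists h.
Qed.

Lemma entropy_set_max (U : set (X * Y -> R)) (pU : X * Y -> R) : U pU ->
  (forall p, U p -> entropy L p <= entropy L pU) ->
  entropy_set L U = entropy L pU.
Proof.
move=> UpU pU_max; apply/le_anti/andP; split.
  by apply: ge_ereal_sup => _ [p Up <-]; exact: pU_max.
by apply: ereal_sup_ubound; exists pU.
Qed.

Lemma minimax_risk_le_entropy_set (U : set (X * Y -> R)) : (0 < #|Y|)%N ->
  U `<=` Delta _ -> convex_set U -> minimax_risk L U <= entropy_set L U.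
Proof.
move=> Y_gt0 U_dist U_convex; rewrite leNgt; apply/negP.
move=> /lte_between_EFin[c /andP[ent_lt_c c_lt_mm]].
have U_lt q : U q -> exists2 h, @rules R X Y h & exp_loss L h q < c%:E.
  move=> Uq; have : entropy L q < c%:E.
    by apply: le_lt_trans ent_lt_c; apply: ereal_sup_ubound; exists q.
  by move=> /ereal_inf_lt[_ [h h_rule <-]]; exists h.
have [||||||h h_rule h_le] :=
  @minimax_sublevel R H (@rules R X Y) mix_rule _ U mix_dist
  (fun h : H => exp_loss L h) compact_rules _ _ _ _ _ _ c (rules_neq0 Y_gt0) U_lt.
- by move=> s h1 h2; exact: rules_mix.
- by move=> t q p t01 Uq Up; exact: convex_set_mix_dist.
- move=> p s h1 h2 Up s01 h1_rule h2_rule.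
  exact: exp_loss_convex (U_dist _ Up).
- move=> h t q p h_rule t01 Uq Up.
  exact: exp_loss_affine h_rule t01 (U_dist _ Uq) (U_dist _ Up).
- by move=> p Up; exact: exp_loss_lsc (U_dist _ Up).
- by move=> h p h_rule Up; exact: exp_loss_neqNy (U_dist _ Up).
have : max_risk L U h <= c%:E by apply: ge_ereal_sup => _ [p Up <-]; exact: h_le.
have : minimax_risk L U <= max_risk L U h by apply: ereal_inf_lbound; exists h.
by move=> /le_trans/[apply]; rewrite leNgt c_lt_mm.
Qed.

End classification.

Theorem theorem1 (R : realType) (X Y : finType)
  (L : (Y -> R) -> Y -> \bar R)
  (U : set (X * Y -> R)) (hU : X -> Y -> R) (pU : X * Y -> R) :
  (0 < #|X|)%N -> (0 < #|Y|)%N ->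
  score_function L ->
  U `<=` @Delta R (X * Y)%type ->
  convex_set U -> @compact {ptws X * Y -> R} U ->
  is_MRC L U hU ->
  U pU -> (forall p, U p -> (entropy L p <= entropy L pU)%E) ->
  [/\ entropy_set L U = exp_loss L hU pU,
      exp_loss L hU pU = minimax_risk L U,
      (forall h, rules h -> (exp_loss L hU pU <= exp_loss L h pU)%E) &
      (forall p, U p -> (exp_loss L hU p <= exp_loss L hU pU)%E)].
Proof.
move=> _ Y_gt0 L_score U_dist U_convex _ hU_MRC UpU pU_max.
have hU_rule : rules hU by case: hU_MRC.
have ent_pU := entropy_set_max UpU pU_max.
have mm_hU := MRC_max_risk hU_MRC.
have le_mm := minimax_risk_le_entropy_set L_score Y_gt0 U_dist U_convex.
have le_ent : (exp_loss L hU pU <= entropy L pU)%E.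
  by rewrite -ent_pU (le_trans _ le_mm) // -mm_hU exp_loss_le_max_risk.
have eq_ent : exp_loss L hU pU = entropy L pU.
  by apply/le_anti; rewrite le_ent entropy_le_exp_loss.
have eq_mm : exp_loss L hU pU = minimax_risk L U.
  apply/le_anti; rewrite -mm_hU exp_loss_le_max_risk //= mm_hU.
  by rewrite (le_trans le_mm) // ent_pU eq_ent.
split=> [||h h_rule|p Up]; first by rewrite ent_pU eq_ent.
- exact: eq_mm.
- by rewrite eq_ent entropy_le_exp_loss.
- by rewrite eq_mm -mm_hU exp_loss_le_max_risk.
Qed.
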